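(* For every $\epsilon>0$ and every $m\in\mathbb N$ there exist $\delta>0$ and $n_0\in\mathbb N$ such that the following holds. If $n>n_0$ and $\sigma\in S_n$ has at most $n^{\delta}$ cycles of length $i$ for each $i<m$, then $E(\sigma)\le 1/m+\epsilon$.
   Context: For $\sigma\in S_n$ let $f_\sigma(i)$ be the number of $i$-cycles of $\sigma$ (fixed points are $1$-cycles). Define $e_1,\dots,e_n$ by $e_1+\cdots+e_k=\max\left(\frac{\log\left(\sum_{i=1}^k i f_\sigma(i)\right)}{\log n},0\right)$ for $1\le k\le n$ (with $\log 0=-\infty$), and set $E(\sigma)=\sum_{i=1}^n e_i/i$. *)

From mathcomp Require Import all_boot all_fingroup.
From Stdlib Require Import Reals.
Set Implicit Arguments. Unset Strict Implicit. Unset Printing Implicit Defensive.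

(* f_sigma(i): number of i-cycles of sigma (fixed points are 1-cycles). *)
Definition cycle_count (n : nat) (s : {perm 'I_n}) (i : nat) : nat :=
  #|[set C in porbits s | #|C| == i]|.

(* partial sum  e_1 + ... + e_k = max(log(sum_{i<=k} i f(i)) / log n, 0),
   with log 0 = -oo, i.e. the value is 0 when the inner sum is 0. *)
Definition partialE (n : nat) (s : {perm 'I_n}) (k : nat) : R :=
  let t := (\sum_(1 <= i < k.+1) i * cycle_count s i)%N in
  if t == 0%N then 0%R else Rmax (ln (INR t) / ln (INR n))%R 0%R.

Definition e_coef (n : nat) (s : {perm 'I_n}) (k : nat) : R :=
  (partialE s k - partialE s k.-1)%R.

Definition Evalue (n : nat) (s : {perm 'I_n}) : R :=
  List.fold_right Rplus 0%R (List.map (fun i => e_coef s i / INR i)%R (iota 1 n)).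

From mathcomp Require Import all_boot all_fingroup.
From Stdlib Require Import Reals Lra.
Set Implicit Arguments. Unset Strict Implicit. Unset Printing Implicit Defensive.

(* Write P(k) = e_1 + ... + e_k (= partialE s k), so that
   E(sigma) = sum_{i=1}^n (P(i) - P(i-1)) / i.
   1. P(k) = L_n(t_k), where t_k = sum_{i<=k} i f(i) is the number of points lying
      on cycles of length at most k and L_n(t) = max(log t / log n, 0), L_n(0) = 0.
      The cycles partition {1..n}, so t_k <= n; as t_k is nondecreasing in k, P is
      nondecreasing with values in [0,1] once n >= 2.
   2. If f(i) <= X for all i < m then t_{m-1} <= m^2 X.  With X = n^(eps/2) and n so
      large that 4 log m < eps log n, this gives P(m-1) <= eps.
   3. For ANY nondecreasing P the weight 1/i is at most 1 for i < m and at most 1/m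
      for i >= m, whence
         sum_{i=1}^n (P(i) - P(i-1)) / i <= P(min(n, m-1)) - P(0) + (P(n) - P(0)) / m.
   Combining the three steps, E(sigma) <= eps + 1/m for all large n, with delta = eps/2. *)

Definition cycle_mass (n : nat) (s : {perm 'I_n}) (k : nat) : nat :=
  (\sum_(1 <= i < k.+1) i * cycle_count s i)%N.

Lemma porbits_trivIset (T : finType) (s : {perm T}) : trivIset (porbits s).
Proof.
apply/trivIsetP => _ _ /imsetP[x _ ->] /imsetP[y _ ->] neq_xy.
apply/pred0P => z /=; apply/negbTE/andP => -[zx zy].
have zX : porbit s z = porbit s x by apply/eqP; rewrite eq_porbit_mem.
have zY : porbit s z = porbit s y by apply/eqP; rewrite eq_porbit_mem.
by move/negP: neq_xy; apply; rewrite -zX -zY.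
Qed.

Lemma sum_indicator_le (c : nat) (r : seq nat) : uniq r ->
  (\sum_(i <- r) (c == i) * c <= c)%N.
Proof.
move=> uniq_r; rewrite -big_distrl /= -big_mkcond /= sum1_count.
have -> : count (eq_op c) r = count_mem c r by apply: eq_count => i; rewrite /= eq_sym.
by rewrite count_uniq_mem //; case: (c \in r); rewrite ?mul1n ?mul0n.
Qed.

(* Since the cycles partition 'I_n, at most n points lie on short cycles. *)
Lemma cycle_mass_le (n : nat) (s : {perm 'I_n}) (k : nat) : (cycle_mass s k <= n)%N.
Proof.
have regroup : cycle_mass s k =
    (\sum_(C in porbits s) \sum_(1 <= i < k.+1) (#|C| == i) * #|C|)%N.
  rewrite /cycle_mass exchange_big; apply: eq_bigr => i _.
  rewrite /cycle_count -sum1_card big_distrr /= big_mkcond [RHS]big_mkcond.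
  apply: eq_bigr => C _; rewrite inE; case: (C \in porbits s) => //=.
  by case: eqP => [->|]; rewrite ?muln1 ?mul1n ?mul0n.
rewrite regroup; apply: (@leq_trans (\sum_(C in porbits s) #|C|)).
  by apply: leq_sum => C _; exact: sum_indicator_le (iota_uniq _ _).
rewrite (eqP (porbits_trivIset s)).
by apply: leq_trans (max_card _) _; rewrite card_ord.
Qed.

Lemma cycle_massS (n : nat) (s : {perm 'I_n}) (k : nat) :
  cycle_mass s k.+1 = (cycle_mass s k + k.+1 * cycle_count s k.+1)%N.
Proof. by rewrite /cycle_mass big_nat_recr. Qed.

Lemma cycle_mass_mono (n : nat) (s : {perm 'I_n}) (k k' : nat) :
  (k <= k')%N -> (cycle_mass s k <= cycle_mass s k')%N.
Proof.
elim: k' => [|k' IH]; first by rewrite leqn0 => /eqP ->.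
rewrite leq_eqVlt => /orP[/eqP -> //|lt_kk'].
by apply: leq_trans (IH lt_kk') _; rewrite cycle_massS leq_addr.
Qed.

Lemma cycle_mass_small_counts (n : nat) (s : {perm 'I_n}) (m : nat) (X : R) :
  (0 <= X)%R ->
  (forall i : nat, (i < m)%N -> (INR (cycle_count s i) <= X)%R) ->
  forall k : nat, (k < m)%N -> (INR (cycle_mass s k) <= INR k * INR k * X)%R.
Proof.
move=> X_ge0 small; elim=> [|k IH] lt_km.
  by rewrite /cycle_mass big_geq //=; lra.
rewrite cycle_massS plus_INR mult_INR S_INR.
have := IH (ltnW lt_km); have := small _ lt_km; have := pos_INR k; nra.
Qed.

Definition log_scale (n t : nat) : R :=
  if t == 0%N then 0%R else Rmax (ln (INR t) / ln (INR n)) 0.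

Lemma partialE_log_scale (n : nat) (s : {perm 'I_n}) (k : nat) :
  partialE s k = log_scale n (cycle_mass s k).
Proof. by []. Qed.

Lemma ln_le (x y : R) : (0 < x)%R -> (x <= y)%R -> (ln x <= ln y)%R.
Proof. by move=> x_gt0 [lt_xy|->]; [left; apply: ln_increasing | lra]. Qed.

Lemma ln_INR_gt0 (n : nat) : (1 < n)%N -> (0 < ln (INR n))%R.
Proof.
move=> n_gt1; rewrite -ln_1; apply: ln_increasing; first lra.
by apply: (lt_INR 1); apply/ltP.
Qed.

Lemma INR_gt0 (t : nat) : t != 0%N -> (0 < INR t)%R.
Proof. by move=> t_neq0; apply: lt_0_INR; apply/ltP; rewrite lt0n. Qed.

Lemma log_scale_ge0 (n t : nat) : (0 <= log_scale n t)%R.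
Proof. by rewrite /log_scale; case: eqP => _; [lra | apply: Rmax_r]. Qed.

Lemma log_scale_mono (n t t' : nat) : (1 < n)%N -> (t <= t')%N ->
  (log_scale n t <= log_scale n t')%R.
Proof.
move=> n_gt1 le_tt'; case: (eqVneq t 0%N) => [->|t_neq0]; first exact: log_scale_ge0.
have t'_neq0 : t' != 0%N by rewrite -lt0n (leq_trans _ le_tt') // lt0n.
rewrite /log_scale (negbTE t_neq0) (negbTE t'_neq0); apply: Rle_max_compat_r.
apply: Rmult_le_compat_r; first by left; apply/Rinv_0_lt_compat/ln_INR_gt0.
by apply: ln_le; [apply: INR_gt0 | apply/le_INR/leP].
Qed.

Lemma log_scale_le1 (n t : nat) : (1 < n)%N -> (t <= n)%N -> (log_scale n t <= 1)%R.
Proof.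
move=> n_gt1 le_tn; apply: Rle_trans (log_scale_mono n_gt1 le_tn) _.
have lnn_gt0 := ln_INR_gt0 n_gt1.
rewrite /log_scale; case: eqP => _; first lra.
by rewrite Rdiv_diag; [apply: Rmax_lub; lra | lra].
Qed.

Lemma log_scale_le (n t : nat) (c : R) : (1 < n)%N -> (0 <= c)%R ->
  (ln (INR t) <= c * ln (INR n))%R -> (log_scale n t <= c)%R.
Proof.
move=> n_gt1 c_ge0 ln_t_le; have lnn_gt0 := ln_INR_gt0 n_gt1.
rewrite /log_scale; case: eqP => _ //; apply: Rmax_lub => //.
apply: (Rmult_le_reg_r (ln (INR n))) => //.
by rewrite /Rdiv Rmult_assoc Rinv_l; lra.
Qed.

Lemma partialE_mono (n : nat) (s : {perm 'I_n}) (k k' : nat) : (1 < n)%N ->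
  (k <= k')%N -> (partialE s k <= partialE s k')%R.
Proof. by move=> n_gt1 le_kk'; apply/log_scale_mono/cycle_mass_mono. Qed.

Lemma partialE_le1 (n : nat) (s : {perm 'I_n}) (k : nat) : (1 < n)%N ->
  (partialE s k <= 1)%R.
Proof. by move=> n_gt1; apply/log_scale_le1/cycle_mass_le. Qed.

Lemma partialE0 (n : nat) (s : {perm 'I_n}) : partialE s 0 = 0%R.
Proof. by rewrite partialE_log_scale /cycle_mass big_geq. Qed.

Lemma partialE_short_cycles (n : nat) (s : {perm 'I_n}) (m : nat) (eps : R) :
  (1 < n)%N -> (0 < m)%N -> (0 < eps)%R ->
  (4 * ln (INR m) < eps * ln (INR n))%R ->
  (forall i : nat, (i < m)%N -> (INR (cycle_count s i) <= Rpower (INR n) (eps / 2))%R) ->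
  (partialE s m.-1 <= eps)%R.
Proof.
move=> n_gt1 m_gt0 eps_gt0 large small.
set X := Rpower (INR n) (eps / 2).
have X_gt0 : (0 < X)%R by apply: exp_pos.
have m_pos : (0 < INR m)%R by apply: lt_0_INR; apply/ltP.
have mass_le : (INR (cycle_mass s m.-1) <= INR m * INR m * X)%R.
  have lt_m1m : (m.-1 < m)%N by rewrite ltn_predL.
  have := cycle_mass_small_counts (Rlt_le _ _ X_gt0) small lt_m1m.
  move/Rle_trans; apply; apply: Rmult_le_compat_r; first lra.
  have : (INR m.-1 <= INR m)%R by apply/le_INR/leP/leq_pred.
  have := pos_INR m.-1; nra.
rewrite partialE_log_scale; case: (eqVneq (cycle_mass s m.-1) 0%N) => [->|mass_neq0].
  by rewrite /log_scale /=; lra.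
apply: log_scale_le => //; first lra.
apply: Rle_trans (ln_le (INR_gt0 mass_neq0) mass_le) _.
rewrite !ln_mult ?/X ?ln_Rpower //; try apply: Rmult_lt_0_compat => //; lra.
Qed.

Definition increment_sum (P : nat -> R) (b k : nat) : R :=
  List.fold_right Rplus 0%R (List.map (fun i => (P i - P i.-1) / INR i)%R (iota b.+1 k)).

Lemma Evalue_increment_sum (n : nat) (s : {perm 'I_n}) :
  Evalue s = increment_sum (partialE s) 0 n.
Proof. by []. Qed.

Section IncrementSum.

Variables (P : nat -> R) (m : nat).
Hypothesis P_mono : forall j : nat, (P j <= P j.+1)%R.
Hypothesis m_gt0 : (0 < m)%N.

(* One increment weighted by 1/i is at most its weight-1/m part plus the
   weight-1 part counted only while i < m. *)
Lemma weighted_increment_le (b : nat) :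
  ((P b.+1 - P b) / INR b.+1 <= (P b.+1 - P b) / INR m
     + P (minn b.+1 m.-1) - P (minn b m.-1))%R.
Proof.
have d_ge0 : (0 <= P b.+1 - P b)%R by have := P_mono b; lra.
have m_pos : (0 < INR m)%R by apply: lt_0_INR; apply/ltP.
have b_pos : (0 < INR b.+1)%R by apply: lt_0_INR; apply/ltP.
case: (ltnP b.+1 m) => [lt_bm|le_mb].
  have -> : minn b.+1 m.-1 = b.+1 by apply/minn_idPl; rewrite -ltnS prednK.
  have -> : minn b m.-1 = b by apply/minn_idPl; rewrite -ltnS prednK // ltnW.
  have : ((P b.+1 - P b) / INR b.+1 <= P b.+1 - P b)%R.
    rewrite -[X in (_ <= X)%R]Rdiv_1_r; apply/Rmult_le_compat_l/Rinv_le_contravar => //; first lra.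
    by rewrite S_INR; have := pos_INR b; lra.
  have : (0 <= (P b.+1 - P b) / INR m)%R by apply/Rmult_le_pos/Rlt_le/Rinv_0_lt_compat.
  lra.
have -> : minn b.+1 m.-1 = m.-1 by apply/minn_idPr; rewrite -ltnS prednK // ltnW.
have -> : minn b m.-1 = m.-1 by apply/minn_idPr; rewrite -ltnS prednK.
have : ((P b.+1 - P b) / INR b.+1 <= (P b.+1 - P b) / INR m)%R.
  by apply/Rmult_le_compat_l/Rinv_le_contravar => //; apply/le_INR/leP.
lra.
Qed.

(* Summing the previous bound telescopes. *)
Lemma increment_sum_le (b k : nat) :
  (increment_sum P b k <= (P (b + k) - P b) / INR m
     + P (minn (b + k) m.-1) - P (minn b m.-1))%R.
Proof.
elim: k b => [|k IH] b.
  by rewrite addn0 /increment_sum /= /Rdiv Rminus_diag Rmult_0_l; lra.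
rewrite /increment_sum; cbn -[INR Rdiv]; rewrite -/(increment_sum P b.+1 k) -addSnnS.
have := IH b.+1; have := weighted_increment_le b; rewrite /Rdiv; lra.
Qed.

End IncrementSum.

Lemma eps_ln_unbounded (a eps : R) : (0 < eps)%R ->
  exists N : nat, forall n : nat, (N < n)%N -> (a < eps * ln (INR n))%R.
Proof.
move=> eps_gt0; have [N ltN] := INR_unbounded (exp (a / eps)).
exists N => n lt_Nn.
have lt_aln : (a / eps < ln (INR n))%R.
  rewrite -[X in (X < _)%R]ln_exp; apply: ln_increasing; first exact: exp_pos.
  by apply: Rlt_trans ltN _; apply/lt_INR/ltP.
replace a with (eps * (a / eps))%R by (field; lra).
exact: Rmult_lt_compat_l.
Qed.

Theorem lemma2p6 :
  forall (eps : R) (m : nat), (0 < eps)%R -> (0 < m)%N ->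
  exists (delta : R) (n0 : nat), (0 < delta)%R /\
    forall (n : nat) (s : {perm 'I_n}), (n0 < n)%N ->
      (forall i : nat, (i < m)%N -> (INR (cycle_count s i) <= Rpower (INR n) delta)%R) ->
      (Evalue s <= / INR m + eps)%R.
Proof.
move=> eps m eps_gt0 m_gt0.
have [N large] := eps_ln_unbounded (4 * ln (INR m)) eps_gt0.
exists (eps / 2)%R, N.+1; split; first lra.
move=> n s lt_Nn small.
have n_gt1 : (1 < n)%N by apply: leq_ltn_trans lt_Nn.
have short_small : (partialE s m.-1 <= eps)%R.
  by apply: partialE_short_cycles => //; apply/large/ltnW.
have abel := increment_sum_le (fun j => partialE_mono s n_gt1 (leqnSn j)) m_gt0 0 n.
rewrite add0n min0n in abel.
have min_le : (partialE s (minn n m.-1) <= partialE s m.-1)%R.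
  by apply: partialE_mono => //; apply: geq_minr.
have m_pos : (0 < INR m)%R by apply: lt_0_INR; apply/ltP.
have top_le : (partialE s n / INR m <= / INR m)%R.
  rewrite /Rdiv -[X in (_ <= X)%R]Rmult_1_l.
  by apply/Rmult_le_compat_r/partialE_le1 => //; left; apply: Rinv_0_lt_compat.
rewrite Evalue_increment_sum; rewrite partialE0 !Rminus_0_r in abel; lra.
Qed.
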